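(* Let $a\ge0$. For $n\ge0$ and $m\le a+n$, let $\lambda_n=(m,a+n-m)$ and $\mu_n=(1,\dots,1,n)$ (with $a$ entries equal to $1$) be compositions of $a+n$, and let $\mathscr{D}_{\mu_n,\lambda_n}$ be the set of minimal-length representatives of the double cosets $\mathfrak{S}_{\mu_n}\backslash\mathfrak{S}_{a+n}/\mathfrak{S}_{\lambda_n}$. Then, regarding $\mathfrak{S}_{a+n}\subseteq\mathfrak{S}_{a+n+1}$ in the standard way, $\mathscr{D}_{\mu_n,\lambda_n}\subseteq\mathscr{D}_{\mu_{n+1},\lambda_{n+1}}$, and for $n\ge m$ the set $\mathscr{D}_{\mu_n,\lambda_n}$ is independent of $n$.
   Context: For a composition $\nu=(\nu_1,\dots,\nu_r)$ of $N$, the standard Young subgroup $\mathfrak{S}_\nu\subseteq\mathfrak{S}_N$ is $\mathfrak{S}_{\{1,\dots,\nu_1\}}\times\mathfrak{S}_{\{\nu_1+1,\dots,\nu_1+\nu_2\}}\times\cdots$. Length is with respect to the simple transpositions $s_i=(i,i+1)$. *)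

From mathcomp Require Import all_boot all_order all_fingroup.
Set Implicit Arguments. Unset Strict Implicit. Unset Printing Implicit Defensive.

(* Points 0..N-1
   (0-based) in block j are exactly {nu_1+..+nu_j, ..., nu_1+..+nu_{j+1} - 1}. *)
Definition blk (nu : seq nat) (i : nat) : nat :=
  count (fun k => sumn (take k nu) <= i) (iota 1 (size nu)).

Definition young (N : nat) (nu : seq nat) : {set 'S_N} :=
  [set s : 'S_N | [forall i : 'I_N, blk nu (s i) == blk nu i]].

Definition word_len (N : nat) (s : 'S_N) (k : nat) : bool :=
  [exists w : k.-tuple ('I_N * 'I_N),
     all (fun p : 'I_N * 'I_N => (p.2 : nat) == (p.1 : nat).+1) w
     && (s == (\prod_(p <- w) tperm p.1 p.2)%g)].

(* The search range 0..N*N covers all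
   permutations (every permutation has length <= N(N-1)/2). *)
Definition perm_length (N : nat) (s : 'S_N) : nat :=
  find (word_len s) (iota 0 (N * N).+1).

(* The double coset S_mu w S_lam (mathcomp product: (x * y) i = y (x i)). *)
Definition dcoset (N : nat) (mu lam : seq nat) (w : 'S_N) : {set 'S_N} :=
  [set (x * w * y)%g | x in young N mu, y in young N lam].

Definition minreps (N : nat) (mu lam : seq nat) : {set 'S_N} :=
  [set w : 'S_N | [forall x in dcoset mu lam w, perm_length w <= perm_length x]].

Definition embS (N : nat) (s : 'S_N) : 'S_N.+1 :=
  lift_perm (@ord_max N) (@ord_max N) s.

Definition mu_comp (a n : nat) : seq nat := nseq a 1 ++ [:: n].
Definition lam_comp (m N : nat) : seq nat := [:: m; N - m].

(* The length of a permutation is its number of inversions.  With the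
   composition convention (x * w * y) i = y (w (x i)), the subgroup S_mu for
   mu = (1^a, n) permutes the arguments >= a of w, and S_lam for lam = (m, N - m)
   permutes the values of w inside [0, m) and inside [m, N).  Hence w is a
   minimal double coset representative iff w increases on [a, N) and w^-1
   increases on [0, m) and on [m, N): otherwise an adjacent transposition in
   S_mu or S_lam removes an inversion, while under these conditions x^-1 maps
   the inversions of w injectively into those of x * w * y.  The conditions are
   stable under S_N <= S_(N+1).  When m <= n, a permutation w of {0..N}
   satisfying them fixes N: w^-1 N >= N - m >= a because w^-1 increases on
   [m, N], and then w increases on [a, N]. *)

From mathcomp Require Import all_boot all_order all_fingroup zify.
Set Implicit Arguments. Unset Strict Implicit. Unset Printing Implicit Defensive.

Section IncreasingOn.
Variable N : nat.

Definition increasing_on (A : pred nat) (s : 'S_N) :=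
  forall i j : 'I_N, A i -> A j -> i < j -> s i < s j.

Variables (A : pred nat) (s : 'S_N).
Hypothesis A_convex : forall i j k, A i -> A j -> i <= k <= j -> A k.
Hypothesis s_adjacent :
  forall i j : 'I_N, A i -> A j -> j = i.+1 :> nat -> s i < s j.

Lemma adjacent_increasing_growth (i j : 'I_N) :
  A i -> A j -> i <= j -> s i + (j - i) <= s j.
Proof.
move=> Ai Aj le_ij; move Ed: (j - i) => d.
elim: d j Aj le_ij Ed => [|d IHd] j Aj le_ij Ed.
  by rewrite addn0 (_ : i = j) //; apply: val_inj => /=; lia.
have lt_ij1 : i + d < N by have := ltn_ord j; lia.
pose j' := Ordinal lt_ij1.
have Aj' : A j' by apply: (A_convex Ai Aj) => /=; lia.
have := IHd j' Aj' (leq_addr _ _) (addKn _ _).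
have Ej : j = j'.+1 :> nat by rewrite /=; lia.
have := s_adjacent Aj' Aj Ej; lia.
Qed.

Lemma adjacent_increasing : increasing_on A s.
Proof.
move=> i j Ai Aj lt_ij; have := adjacent_increasing_growth Ai Aj (ltnW lt_ij).
lia.
Qed.

End IncreasingOn.

Lemma increasing_perm1 N (s : 'S_N) : increasing_on predT s -> s = 1%g.
Proof.
move=> s_incr; apply/permP => j; apply: val_inj; rewrite perm1 /=.
have s_adj (i k : 'I_N) : true -> true -> k = i.+1 :> nat -> s i < s k.
  by move=> _ _ e; apply: s_incr => //; lia.
have growth := adjacent_increasing_growth (fun _ _ _ _ _ _ => erefl) s_adj.
have N_gt0 : 0 < N by apply: leq_ltn_trans (ltn_ord j).
have last_lt : N.-1 < N by rewrite ltn_predL.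
pose first := Ordinal N_gt0; pose last := Ordinal last_lt.
have := growth first j erefl erefl (leq0n j).
have le_j_last : j <= last by rewrite /= -ltnS prednK.
have := growth j last erefl erefl le_j_last.
have := ltn_ord (s last); rewrite /=; lia.
Qed.

Section Inversions.
Variable N : nat.
Implicit Types (r s : 'S_N) (i j p q : 'I_N).

Definition inversions s : {set 'I_N * 'I_N} :=
  [set pq : 'I_N * 'I_N | (pq.1 < pq.2) && (s pq.2 < s pq.1)].

Definition ninv s := #|inversions s|.

Lemma ninv1 : ninv 1 = 0.
Proof.
apply/eqP; rewrite cards_eq0; apply/eqP/setP => pq; rewrite !inE !perm1.
by apply/negbTE; rewrite negb_and -!leqNgt; case: leqP => // /ltnW.
Qed.

Lemma ninvV s : ninv s^-1 = ninv s.
Proof.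
suff ninvV_le r : ninv r <= ninv r^-1.
  by apply/eqP; rewrite eqn_leq -{2}(invgK s) !ninvV_le.
pose swap_r pq := (r pq.2, r pq.1).
have swap_inj : injective swap_r by move=> [p q] [p' q'] [] /perm_inj-> /perm_inj->.
rewrite /ninv -(card_preimset (inversions r^-1) swap_inj).
apply/subset_leq_card/subsetP => -[p q].
by rewrite !inE /= !permK => /andP[-> ->].
Qed.

Lemma ninv_le_sqr s : ninv s <= N * N.
Proof. by apply: leq_trans (max_card _) _; rewrite card_prod card_ord. Qed.

Lemma tperm_adjacent_ltn i j p q : j = i.+1 :> nat -> (p, q) != (i, j) -> (p, q) != (j, i) ->
  (tperm i j p < tperm i j q) = (p < q).
Proof.
rewrite !xpair_eqE /= !permE /= -!val_eqE.
by do !case: eqP => //=; lia.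
Qed.

(* [tperm i j * r] is [r] with its values at positions [i] and [j] swapped. *)
Lemma ninv_tpermM_ascent r i j : j = i.+1 :> nat -> r i < r j ->
  ninv (tperm i j * r) = (ninv r).+1.
Proof.
move=> Ej lt_rij; set t := tperm i j.
pose swap_t pq := (t pq.1, t pq.2).
have swap_tK : involutive swap_t by move=> [p q]; rewrite /swap_t /= !tpermK.
rewrite /ninv.
have -> : inversions (t * r) = swap_t @^-1: ((j, i) |: inversions r).
  apply/setP => -[p q]; rewrite !inE /swap_t /= !permM.
  have [[-> ->]|ne_ij] := eqVneq (p, q) (i, j).
    by rewrite /t tpermL tpermR eqxx Ej ltnSn lt_rij.
  have [[-> ->]|ne_ji] := eqVneq (p, q) (j, i).
    rewrite /t tpermL tpermR Ej ltnNge leqnSn /= xpair_eqE.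
    rewrite [r j < r i]ltnNge (ltnW lt_rij) andbF orbF.
    by apply/esym/andP => -[/eqP eq_ij _]; move: Ej; rewrite eq_ij; lia.
  have -> : (t p, t q) == (j, i) = false.
    apply: contraNF ne_ij => /eqP[tp tq].
    by rewrite -[p](tpermK i j) -[q](tpermK i j) -/t tp tq /t tpermL tpermR.
  by rewrite tperm_adjacent_ltn.
rewrite card_preimset; last exact: inv_inj.
by rewrite cardsU1 inE /= Ej ltnNge leqnSn.
Qed.

Lemma ninv_tpermM_descent r i j : j = i.+1 :> nat -> r j < r i ->
  (ninv (tperm i j * r)).+1 = ninv r.
Proof.
move=> Ej lt_rji; rewrite -[in RHS](mul1g r) -(tperm2 i j) -mulgA.
by rewrite (ninv_tpermM_ascent (r := tperm i j * r) Ej) // !permM tpermL tpermR.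
Qed.

Lemma ninv_tpermM_le r i j : j = i.+1 :> nat -> ninv (tperm i j * r) <= (ninv r).+1.
Proof.
move=> Ej; have [lt_rij|lt_rji|/val_inj/perm_inj eq_ij] := ltngtP (r i) (r j).
- by rewrite ninv_tpermM_ascent.
- by rewrite -(ninv_tpermM_descent Ej lt_rji) leqW.
- by move: Ej; rewrite eq_ij; lia.
Qed.

Lemma ascent_of_ninv_le r i j : j = i.+1 :> nat -> ninv r <= ninv (tperm i j * r) -> r i < r j.
Proof.
move=> Ej le_ninv; have [//|lt_rji|/val_inj/perm_inj eq_ij] := ltngtP (r i) (r j).
  by move: le_ninv; rewrite -(ninv_tpermM_descent Ej lt_rji) ltnn.
by move: Ej; rewrite eq_ij; lia.
Qed.

Lemma ninv_le_word_len s k : word_len s k -> ninv s <= k.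
Proof.
elim: k s => [|k IHk] s /existsP[w /andP[adj_w /eqP->]].
  by rewrite tuple0 big_nil ninv1.
case/tupleP: w adj_w => -[i j] w /= /andP[/eqP Ej adj_w]; rewrite big_cons.
have /IHk : word_len (\prod_(p <- w) tperm p.1 p.2)%g k.
  by apply/existsP; exists w; rewrite adj_w eqxx.
by move=> le_k; apply: leq_trans (ninv_tpermM_le _ Ej) _.
Qed.

Lemma perm1_or_descent s : s = 1%g \/ exists i j, j = i.+1 :> nat /\ s j < s i.
Proof.
have [|] := boolP [exists i : 'I_N, exists j : 'I_N, (j == i.+1 :> nat) && (s j < s i)].
  by move/existsP=> -[i /existsP[j /andP[/eqP Ej lt_sji]]]; right; exists i, j.
rewrite negb_exists => /forallP no_descent; left.
apply/increasing_perm1/adjacent_increasing => // i j _ _ Ej.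
have := no_descent i; rewrite negb_exists => /forallP/(_ j).
rewrite Ej eqxx /= -leqNgt leq_eqVlt.
by case/orP=> [/eqP/val_inj/perm_inj eq_ij|//]; move: Ej; rewrite eq_ij; lia.
Qed.

Lemma word_len_ninv s : word_len s (ninv s).
Proof.
move Ek: (ninv s) => k; elim: k s Ek => [|k IHk] s Ek;
  have [s1|[i [j [Ej lt_sji]]]] := perm1_or_descent s.
- by apply/existsP; exists [tuple]; rewrite /= big_nil s1 eqxx.
- by have := ninv_tpermM_descent Ej lt_sji; rewrite Ek.
- by move: Ek; rewrite s1 ninv1.
have /IHk/existsP[w /andP[adj_w /eqP w_eq]] : ninv (tperm i j * s) = k.
  by apply/eq_add_S; rewrite ninv_tpermM_descent.
apply/existsP; exists [tuple of (i, j) :: w].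
by rewrite /= Ej eqxx adj_w big_cons -w_eq mulgA tperm2 mul1g eqxx.
Qed.

Lemma perm_length_ninv s : perm_length s = ninv s.
Proof.
have ninv_in : ninv s \in iota 0 (N * N).+1 by rewrite mem_iota ltnS ninv_le_sqr.
have has_len : has (word_len s) (iota 0 (N * N).+1).
  by apply/hasP; exists (ninv s); last exact: word_len_ninv.
apply/eqP; rewrite eqn_leq; apply/andP; split.
  rewrite leqNgt; apply/negP => /(before_find 0).
  by rewrite nth_iota ?add0n ?word_len_ninv //; rewrite mem_iota in ninv_in; lia.
have := nth_find 0 has_len; rewrite nth_iota ?add0n; first exact: ninv_le_word_len.
by move: has_len; rewrite has_find size_iota.
Qed.

End Inversions.

Section YoungSubgroup.
Variables (N : nat) (nu : seq nat).
Implicit Types (x : 'S_N) (i j : 'I_N).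

Lemma young_blk x i : x \in young N nu -> blk nu (x i) = blk nu i.
Proof. by rewrite inE => /forallP/(_ i)/eqP. Qed.

Lemma young1 : 1%g \in young N nu.
Proof. by rewrite inE; apply/forallP => i; rewrite perm1. Qed.

Lemma youngV x : x \in young N nu -> x^-1%g \in young N nu.
Proof.
move=> x_young; rewrite inE; apply/forallP => i.
by rewrite -{2}(permKV x i) (young_blk _ x_young).
Qed.

Lemma tperm_young i j : blk nu i = blk nu j -> tperm i j \in young N nu.
Proof.
move=> eq_blk; rewrite inE; apply/forallP => k.
by case: tpermP => [->|->|] //; rewrite eq_blk.
Qed.

End YoungSubgroup.

Lemma minrepsP N (mu lam : seq nat) (w : 'S_N) :
  reflect (forall x y, x \in young N mu -> y \in young N lam -> ninv w <= ninv (x * w * y))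
          (w \in minreps N mu lam).
Proof.
rewrite inE; apply: (iffP forall_inP) => [minw x y x_mu y_lam | minw _ /imset2P[x y x_mu y_lam ->]].
  by rewrite -!perm_length_ninv; apply/minw/imset2_f.
by rewrite !perm_length_ninv; apply: minw.
Qed.

Lemma count_leq_iota1 i a : count (leq^~ i) (iota 1 a) = minn i a.
Proof.
elim: a => [|a IHa]; first by rewrite minn0.
by rewrite -[a.+1]addn1 iotaD count_cat IHa /= add1n; lia.
Qed.

Lemma blk_mu_comp a n i : i < a + n -> blk (mu_comp a n) i = minn i a.
Proof.
move=> lt_i; rewrite /blk /mu_comp size_cat size_nseq /= iotaD count_cat /= add1n.
rewrite [take a.+1 _]take_oversize; last by rewrite size_cat size_nseq addn1.
rewrite sumn_cat sumn_nseq /= mul1n !addn0.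
rewrite (_ : a + n <= i = false) ?addn0; last by apply/negbTE; rewrite -ltnNge.
rewrite (@eq_in_count _ _ (leq^~ i)); last first.
  move=> k; rewrite mem_iota add1n => /andP[k_gt0 k_le_a].
  rewrite take_cat size_nseq; case: ltnP => [lt_ka|ge_ka].
    by rewrite take_nseq ?sumn_nseq ?mul1n // ltnW.
  by rewrite (_ : k = a) ?subnn ?take0 ?cats0 ?sumn_nseq ?mul1n //; lia.
exact: count_leq_iota1.
Qed.

Lemma blk_lam_comp m N i : m <= N -> i < N -> blk (lam_comp m N) i = (m <= i).
Proof.
move=> le_mN lt_iN; rewrite /blk /= !addn0 subnKC //.
by rewrite (_ : N <= i = false) ?addn0 //; apply/negbTE; rewrite -ltnNge.
Qed.

Section MinimalRepresentatives.
Variables (N a n m : nat).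
Hypotheses (def_N : a + n = N) (le_mN : m <= N).
Local Notation mu := (mu_comp a n).
Local Notation lam := (lam_comp m N).
Implicit Types (w x y : 'S_N) (i j : 'I_N).

Lemma young_mu_fix x i : x \in young N mu -> i < a -> x i = i :> nat.
Proof.
move=> x_mu lt_ia; have := young_blk i x_mu.
by rewrite !blk_mu_comp ?def_N //; lia.
Qed.

Lemma young_mu_ge x i : x \in young N mu -> a <= i -> a <= x i.
Proof.
move=> x_mu le_ai; have := young_blk i x_mu.
by rewrite !blk_mu_comp ?def_N //; lia.
Qed.

Lemma tperm_young_mu i j : a <= i -> a <= j -> tperm i j \in young N mu.
Proof.
move=> le_ai le_aj; apply: tperm_young; rewrite !blk_mu_comp ?def_N //; lia.
Qed.

Lemma young_lam_ltn y i : y \in young N lam -> (y i < m) = (i < m).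
Proof.
move=> y_lam; have := young_blk i y_lam.
by rewrite !blk_lam_comp // !ltnNge; case: (m <= y i); case: (m <= i).
Qed.

Lemma tperm_young_lam i j : (i < m) = (j < m) -> tperm i j \in young N lam.
Proof.
by move=> eq_blk; apply: tperm_young; rewrite !blk_lam_comp // [m <= i]leqNgt [m <= j]leqNgt eq_blk.
Qed.

Lemma minreps_of_increasing w :
    increasing_on [pred k | a <= k] w ->
    increasing_on [pred k | k < m] w^-1 -> increasing_on [pred k | m <= k] w^-1 ->
  w \in minreps N mu lam.
Proof.
move=> w_incr wV_low wV_high; apply/minrepsP => x y x_mu y_lam.
have xV_mu := youngV x_mu.
pose xV2 pq := (x^-1 pq.1, x^-1 pq.2)%g.
have xV2_inj : injective xV2 by move=> [p q] [p' q'] [] /perm_inj-> /perm_inj->.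
rewrite /ninv -(card_preimset (inversions (x * w * y)) xV2_inj).
apply/subset_leq_card/subsetP => -[p q]; rewrite !inE /= => /andP[lt_pq lt_wqp].
have lt_pa : p < a.
  rewrite ltnNge; apply/negP => le_ap.
  by have := w_incr p q le_ap (leq_trans le_ap (ltnW lt_pq)) lt_pq; lia.
have xV_p : x^-1%g p = p :> nat := young_mu_fix xV_mu lt_pa.
have lt_p_xVq : p < x^-1%g q.
  have [lt_qa|le_aq] := ltnP q a; first by rewrite (young_mu_fix xV_mu lt_qa).
  exact: leq_trans lt_pa (young_mu_ge xV_mu le_aq).
have w_blocks : (w q < m) && (m <= w p).
  move: (wV_low (w q) (w p)) (wV_high (w q) (w p)); rewrite /= !permK; lia.
rewrite !permM !permKV xV_p lt_p_xVq /=.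
by move: w_blocks (young_lam_ltn (w q) y_lam) (young_lam_ltn (w p) y_lam); lia.
Qed.

Lemma increasing_of_minreps w : w \in minreps N mu lam ->
  [/\ increasing_on [pred k | a <= k] w,
      increasing_on [pred k | k < m] w^-1 & increasing_on [pred k | m <= k] w^-1].
Proof.
move/minrepsP => w_min.
have wV_ascent (u v : 'I_N) : (u < m) = (v < m) -> v = u.+1 :> nat -> (w^-1)%g u < (w^-1)%g v.
  move=> same_blk Ev; apply: (ascent_of_ninv_le Ev).
  rewrite -(tpermV u v) -invMg !ninvV.
  by have := w_min _ _ (young1 _ _) (tperm_young_lam same_blk); rewrite mul1g.
split; apply: adjacent_increasing => [i j k /=|i j /= Ai Aj Ej]; try lia.
- apply: (ascent_of_ninv_le Ej).
  by have := w_min _ _ (tperm_young_mu Ai Aj) (young1 _ _); rewrite mulg1.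
- by apply: wV_ascent Ej; rewrite Ai Aj.
- by apply: wV_ascent Ej; rewrite !ltnNge Ai Aj.
Qed.

Lemma minreps_mu_lamP w :
  w \in minreps N mu lam <->
  [/\ increasing_on [pred k | a <= k] w,
      increasing_on [pred k | k < m] w^-1 & increasing_on [pred k | m <= k] w^-1].
Proof. by split=> [/increasing_of_minreps|[]]; last exact: minreps_of_increasing. Qed.

End MinimalRepresentatives.

Lemma embS_lift N (s : 'S_N) (k : 'I_N) : embS s (lift ord_max k) = s k :> nat.
Proof. by rewrite /embS lift_perm_lift lift_max. Qed.

Lemma embS_max N (s : 'S_N) : embS s ord_max = ord_max.
Proof. exact: lift_perm_id. Qed.

Lemma increasing_on_embS N (A : pred nat) (s : 'S_N) :
  increasing_on A (embS s) <-> increasing_on A s.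
Proof.
split=> s_incr i j.
  by have := s_incr (lift ord_max i) (lift ord_max j); rewrite !embS_lift !lift_max.
case: (unliftP ord_max i) => [i' ->|->]; case: (unliftP ord_max j) => [j' ->|->];
  rewrite ?embS_lift ?embS_max ?lift_max /=.
- exact: s_incr.
- by rewrite ltn_ord.
- by rewrite ltnNge (ltnW (ltn_ord j')).
- by lia.
Qed.

Lemma embSV N (s : 'S_N) : (embS s)^-1%g = embS s^-1.
Proof. exact: lift_permV. Qed.

Lemma embS_minrepsE a n m (w : 'S_(a + n)) : m <= a + n ->
  (embS w \in minreps (a + n).+1 (mu_comp a n.+1) (lam_comp m (a + n).+1))
  = (w \in minreps (a + n) (mu_comp a n) (lam_comp m (a + n))).
Proof.
move=> le_m; apply/idP/idP.
  move/(minreps_mu_lamP (addnS a n) (leqW le_m)); rewrite embSV.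
  case=> /increasing_on_embS ? /increasing_on_embS ? /increasing_on_embS ?.
  exact/(minreps_mu_lamP erefl le_m).
move/(minreps_mu_lamP erefl le_m) => -[? ? ?].
by apply/(minreps_mu_lamP (addnS a n) (leqW le_m)); rewrite embSV; split; apply/increasing_on_embS.
Qed.

Lemma fix_max_of_increasing N a m (w : 'S_N.+1) : a + m <= N ->
  increasing_on [pred k | a <= k] w -> increasing_on [pred k | m <= k] w^-1 ->
  w ord_max = ord_max.
Proof.
move=> le_amN w_incr wV_incr.
have le_mN : m <= N by lia.
have lt_m_N1 : m < N.+1 by [].
have wV_adj (i j : 'I_N.+1) : m <= i -> m <= j -> j = i.+1 :> nat -> (w^-1)%g i < (w^-1)%g j.
  by move=> le_mi le_mj Ej; apply: wV_incr => //; rewrite Ej.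
have m_convex (i j k : nat) : m <= i -> m <= j -> i <= k <= j -> m <= k by lia.
have := adjacent_increasing_growth (A := [pred k | m <= k]) m_convex wV_adj
  (i := Ordinal lt_m_N1) (j := ord_max) (leqnn m) le_mN le_mN.
rewrite /= => ge_p; set p := (w^-1)%g ord_max in ge_p.
have le_ap : a <= p by lia.
have w_p : w p = ord_max by rewrite permKV.
suff p_max : p = ord_max by rewrite -{1}p_max w_p.
apply/val_inj/eqP; rewrite /= eqn_leq -ltnS ltn_ord leqNgt; apply/negP => lt_pN.
have := w_incr p ord_max le_ap (leq_trans le_ap (ltnW lt_pN)) lt_pN.
by rewrite w_p ltnNge -ltnS ltn_ord.
Qed.

Lemma embS_of_fix_max N (w : 'S_N.+1) : w ord_max = ord_max -> exists s : 'S_N, w = embS s.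
Proof.
move=> w_max; pose f k := odflt k (unlift ord_max (w (lift ord_max k))).
have lift_f k : lift ord_max (f k) = w (lift ord_max k).
  rewrite /f; case: unliftP => [j -> //|w_lift_max].
  by move: (neq_lift ord_max k); rewrite -(inj_eq (@perm_inj _ w)) w_max w_lift_max eqxx.
have f_inj : injective f.
  by move=> k k' /(congr1 (lift ord_max)); rewrite !lift_f => /perm_inj/lift_inj.
exists (perm f_inj); apply/permP => i; rewrite /embS.
case: (unliftP ord_max i) => [k ->|->]; last by rewrite lift_perm_id.
by rewrite lift_perm_lift permE lift_f.
Qed.

Theorem lemma3p3 (a m n : nat) (hm : m <= a + n) :
  @embS (a + n) @: minreps (a + n) (mu_comp a n) (lam_comp m (a + n))
    \subset minreps (a + n).+1 (mu_comp a n.+1) (lam_comp m (a + n).+1)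
  /\ (m <= n ->
      minreps (a + n).+1 (mu_comp a n.+1) (lam_comp m (a + n).+1)
      = @embS (a + n) @: minreps (a + n) (mu_comp a n) (lam_comp m (a + n))).
Proof.
have embS_sub : @embS (a + n) @: minreps (a + n) (mu_comp a n) (lam_comp m (a + n))
    \subset minreps (a + n).+1 (mu_comp a n.+1) (lam_comp m (a + n).+1).
  by apply/subsetP => _ /imsetP[w w_min ->]; rewrite embS_minrepsE.
split=> // le_mn; apply/eqP; rewrite eqEsubset embS_sub andbT.
apply/subsetP => w' /[dup] w'_min /(minreps_mu_lamP (addnS a n) (leqW hm)) [w'_incr _ w'V_incr].
have le_am_an : a + m <= a + n by rewrite leq_add2l.
have [s eq_w'] := embS_of_fix_max (fix_max_of_increasing le_am_an w'_incr w'V_incr).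
by rewrite eq_w' imset_f // -(embS_minrepsE _ hm) -eq_w'.
Qed.
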